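(* Let $\ell\ge2$ and $m\ge1$ be integers, and define $T\colon\mathbb{C}^2\to\mathbb{C}^2$ by $T(z,w)=\bigl(w,\ z^\ell+\bar z\,w^m\bigr)$, regarded as a smooth map $\mathbb{R}^4\to\mathbb{R}^4$ with the complex orientations on source and target. Then the origin is the only point where $dT$ has rank $2$, and its index satisfies $\mathrm{ind}_0(T)=m(\ell-1)$.
   Context: Index of an isolated rank-$2$ point. Let $g\colon M\to N$ be a smooth map between oriented $4$-manifolds, and let $p$ be an isolated point with $\mathrm{rk}(dg_p)=2$. Choose oriented local coordinates $x=(x_1,\dots,x_4)$ centered at $p$ and $y$ centered at $g(p)$ in which \[ g(x)=\bigl(x_1,\ x_2,\ A(x),\ B(x)\bigr), \] where $A(0)=B(0)=0$ and the matrix $\begin{pmatrix}\partial A/\partial x_3&\partial A/\partial x_4\\ \partial B/\partial x_3&\partial B/\partial x_4\end{pmatrix}$ vanishes at $x=0$ and only there. The index $\mathrm{ind}_p(g)$ is the local degree at $0$ of the map \[ \hat g=\Bigl(\frac{\partial A}{\partial x_3},\ \frac{\partial B}{\partial x_3},\ \frac{\partial A}{\partial x_4},\ \frac{\partial B}{\partial x_4}\Bigr)\colon(\mathbb{R}^4,0)\to(\mathbb{R}^4,0), \] that is, the signed count of preimages near $0$ of a sufficiently small regular value. For $T$, writing $K(w,z)=z^\ell+\bar z w^m$ and using the complex coordinates $(w,z)$, this local degree equals the local degree at $0$ of \[ \kappa(w,z)=\Bigl(\frac{\partial K}{\partial z}+\frac{\partial K}{\partial\bar z},\ i\Bigl(\frac{\partial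 K}{\partial z}-\frac{\partial K}{\partial\bar z}\Bigr)\Bigr). \] *)

From Stdlib Require Import Reals Lra Lia ZArith List.
Open Scope R_scope.

Record R4 := mkR4 { c0 : R; c1 : R; c2 : R; c3 : R }.

Definition coord (v : R4) (i : nat) : R :=
  match i with 0%nat => c0 v | 1%nat => c1 v | 2%nat => c2 v | 3%nat => c3 v | _ => 0 end.

Definition ofFun (f : nat -> R) : R4 := mkR4 (f 0%nat) (f 1%nat) (f 2%nat) (f 3%nat).

Definition zero4 : R4 := mkR4 0 0 0 0.
Definition vadd (u v : R4) : R4 := ofFun (fun i => coord u i + coord v i).
Definition vsub (u v : R4) : R4 := ofFun (fun i => coord u i - coord v i).
Definition vscale (a : R) (v : R4) : R4 := ofFun (fun i => a * coord v i).
Definition basis (i : nat) : R4 := ofFun (fun k => if Nat.eqb k i then 1 else 0).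

Fixpoint sumn (n : nat) (f : nat -> R) : R :=
  match n with 0%nat => 0 | S n' => sumn n' f + f n' end.

Definition norm4 (v : R4) : R := sqrt (sumn 4 (fun i => coord v i ^ 2)).

Definition Mat := nat -> nat -> R.

Definition mulv (J : Mat) (h : R4) : R4 :=
  ofFun (fun i => sumn 4 (fun j => J i j * coord h j)).

Definition minor (M : Mat) (j : nat) : Mat :=
  fun i k => M (S i) (if Nat.ltb k j then k else S k).

Fixpoint detn (n : nat) (M : Mat) : R :=
  match n with
  | 0%nat => 1
  | S n' => sumn n (fun j => (-1) ^ j * M 0%nat j * detn n' (minor M j))
  end.

Definition det4 (M : Mat) : R := detn 4 M.

Definition cols_indep (J : Mat) (cols : list nat) : Prop :=
  forall c : nat -> R,
    (forall i, (i < 4)%nat -> fold_right Rplus 0 (map (fun k => c k * J i k) cols) = 0) ->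
    forall k, In k cols -> c k = 0.

Definition valid_cols (cols : list nat) : Prop :=
  NoDup cols /\ Forall (fun k => (k < 4)%nat) cols.

Definition rank4 (J : Mat) (r : nat) : Prop :=
  (exists cols, length cols = r /\ valid_cols cols /\ cols_indep J cols) /\
  (forall cols, length cols = S r -> valid_cols cols -> ~ cols_indep J cols).

Definition FDeriv (f : R4 -> R4) (x : R4) (J : Mat) : Prop :=
  forall eps, 0 < eps -> exists delta, 0 < delta /\
    forall h, norm4 h < delta ->
      norm4 (vsub (vsub (f (vadd x h)) (f x)) (mulv J h)) <= eps * norm4 h.

(** v is the partial derivative of F : R^4 -> R at x w.r.t. coordinate x_(i+1) *)
Definition is_partial (F : R4 -> R) (i : nat) (x : R4) (v : R) : Prop :=
  derivable_pt_lim (fun t => F (vadd x (vscale t (basis i)))) 0 v.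

(** * Local degree at 0 of a map (R^4,0) -> (R^4,0):
    the signed count of preimages near 0 of a sufficiently small regular value. *)
Definition sgnZ (a : R) : Z := if Rlt_dec 0 a then 1%Z else (-1)%Z.

Definition IsLocalDegree (f : R4 -> R4) (d : Z) : Prop :=
  f zero4 = zero4 /\
  exists r, 0 < r /\
    (forall x, norm4 x <= r -> f x = zero4 -> x = zero4) /\
    exists delta, 0 < delta /\
      forall y, norm4 y < delta ->
        (* y is a regular value of f restricted to the ball B_r *)
        (forall x, norm4 x < r -> f x = y -> exists J, FDeriv f x J /\ det4 J <> 0) ->
        exists pts : list (R4 * Mat),
          NoDup (map fst pts) /\
          (forall x, In x (map fst pts) <-> (norm4 x < r /\ f x = y)) /\
          Forall (fun p => FDeriv f (fst p) (snd p)) pts /\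
          fold_right Z.add 0%Z (map (fun p => sgnZ (det4 (snd p))) pts) = d.

Definition C := (R * R)%type.
Definition Cadd (a b : C) : C := (fst a + fst b, snd a + snd b).
Definition Cmul (a b : C) : C :=
  (fst a * fst b - snd a * snd b, fst a * snd b + snd a * fst b).
Definition Cconj (a : C) : C := (fst a, - snd a).
Fixpoint Cpow (a : C) (n : nat) : C :=
  match n with 0%nat => (1, 0) | S n' => Cmul a (Cpow a n') end.

Definition Kmap (l m : nat) (w z : C) : C :=
  Cadd (Cpow z l) (Cmul (Cconj z) (Cpow w m)).

(** T(z,w) = (w, z^l + conj(z) w^m), in real coordinates
    (Re z, Im z, Re w, Im w) -> (Re w', Im w'...) with complex orientations *)
Definition Tmap (l m : nat) (p : R4) : R4 :=
  let z := (c0 p, c1 p) in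
  let w := (c2 p, c3 p) in
  let k := Kmap l m w z in
  mkR4 (fst w) (snd w) (fst k) (snd k).

(** Local normal form: oriented coordinates x = (Re w, Im w, Re z, Im z)
    on the source (an even permutation of (Re z, Im z, Re w, Im w)), identity
    coordinates on the target; then T = (x1, x2, A(x), B(x)). *)
Definition Acomp (l m : nat) (x : R4) : R := fst (Kmap l m (c0 x, c1 x) (c2 x, c3 x)).
Definition Bcomp (l m : nat) (x : R4) : R := snd (Kmap l m (c0 x, c1 x) (c2 x, c3 x)).

Definition is_ghat (l m : nat) (gh : R4 -> R4) : Prop :=
  forall x,
    is_partial (Acomp l m) 2 x (c0 (gh x)) /\
    is_partial (Bcomp l m) 2 x (c1 (gh x)) /\
    is_partial (Acomp l m) 3 x (c2 (gh x)) /\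
    is_partial (Bcomp l m) 3 x (c3 (gh x)).

From Stdlib Require Import Reals ZArith List Lra Lia Psatz FinFun.
Open Scope R_scope.

(* Write K(w,z) = z^l + conj(z) w^m, a = l z^(l-1) and b = w^m.  Then
     ∂K/∂(Re z) = a + b   and   ∂K/∂(Im z) = i (a - b).
   Part 1.  The first two rows of dT are those of the projection (z,w) |-> w,
   so dT has rank 2 iff both partials above vanish, i.e. iff a = b = 0,
   i.e. iff z = w = 0.
   Part 2.  In the coordinates x = (w, z), ĝ = (a + b, i (a - b)) read in
   real coordinates.  Hence ĝ(x) = y iff z^(l-1) and w^m equal explicit
   complex numbers ca(y), cb(y); at a regular value these are nonzero (or
   the exponent is 1), so by de Moivre the fibre has exactly m (l-1)
   points.  Moreover det dĝ = 4 |m w^(m-1)|^2 |l (l-1) z^(l-2)|^2 >= 0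
   (ĝ is a holomorphic map composed with an orientation-preserving linear
   map), so every preimage counts +1 and the local degree is m (l-1). *)

Lemma pair_eq (a b c d : R) : a = c -> b = d -> (a, b) = (c, d).
Proof. now intros -> ->. Qed.

Definition Cnorm2 (z : C) : R := fst z * fst z + snd z * snd z.

Lemma Cnorm2_mul (a b : C) : Cnorm2 (Cmul a b) = Cnorm2 a * Cnorm2 b.
Proof. destruct a, b; unfold Cnorm2, Cmul; simpl; ring. Qed.

Lemma Cnorm2_pow (z : C) (n : nat) : Cnorm2 (Cpow z n) = Cnorm2 z ^ n.
Proof.
  induction n as [|n IH]; simpl; [unfold Cnorm2; simpl; ring|].
  now rewrite Cnorm2_mul, IH.
Qed.

Lemma Cnorm2_nonneg (z : C) : 0 <= Cnorm2 z.
Proof. unfold Cnorm2; nra. Qed.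

Lemma Cnorm2_eq0 (z : C) : Cnorm2 z = 0 -> z = (0, 0).
Proof. destruct z as [a b]; unfold Cnorm2; simpl; intros; apply pair_eq; nra. Qed.

Lemma C_eq0_dec (z : C) : z = (0, 0) \/ z <> (0, 0).
Proof.
  destruct z as [a b]; destruct (Req_dec a 0), (Req_dec b 0); subst; auto;
    right; intro E; injection E; lra.
Qed.

Lemma Cpow_1 (z : C) : Cpow z 1 = z.
Proof. destruct z; unfold Cpow, Cmul; simpl; apply pair_eq; ring. Qed.

Lemma Cpow_0 (n : nat) : (1 <= n)%nat -> Cpow (0, 0) n = (0, 0).
Proof.
  destruct n as [|n]; [lia|]; intros _; simpl.
  destruct (Cpow (0, 0) n); unfold Cmul; simpl; apply pair_eq; ring.
Qed.

Lemma Cpow_eq0 (z : C) (n : nat) : Cpow z n = (0, 0) -> z = (0, 0).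
Proof.
  intros H; apply Cnorm2_eq0.
  assert (Hn : Cnorm2 z ^ n = 0).
  { rewrite <- Cnorm2_pow, H; unfold Cnorm2; simpl; ring. }
  destruct (Req_dec (Cnorm2 z) 0) as [|Hz]; [assumption|].
  now destruct (pow_nonzero _ n Hz).
Qed.

Lemma Cnorm2_lt1_of_pow (z : C) (n : nat) : (1 <= n)%nat ->
  Cnorm2 (Cpow z n) < 1 -> Cnorm2 z < 1.
Proof.
  intros Hn Hc; rewrite Cnorm2_pow in Hc.
  destruct (Rlt_dec (Cnorm2 z) 1) as [|Hge]; [assumption|].
  pose proof (Rle_pow (Cnorm2 z) 0 n ltac:(lra) ltac:(lia)); simpl in *; lra.
Qed.

Lemma dl_ext (f : R -> R) (x l l' : R) :
  derivable_pt_lim f x l -> l = l' -> derivable_pt_lim f x l'.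
Proof. now intros ? <-. Qed.

Lemma dplus (f g : R -> R) (x a b : R) :
  derivable_pt_lim f x a -> derivable_pt_lim g x b ->
  derivable_pt_lim (fun t => f t + g t) x (a + b).
Proof. apply derivable_pt_lim_plus. Qed.

Lemma dminus (f g : R -> R) (x a b : R) :
  derivable_pt_lim f x a -> derivable_pt_lim g x b ->
  derivable_pt_lim (fun t => f t - g t) x (a - b).
Proof. apply derivable_pt_lim_minus. Qed.

Lemma dopp (f : R -> R) (x a : R) :
  derivable_pt_lim f x a -> derivable_pt_lim (fun t => - f t) x (- a).
Proof. apply derivable_pt_lim_opp. Qed.

Lemma dmul (f g : R -> R) (x a b : R) :
  derivable_pt_lim f x a -> derivable_pt_lim g x b ->
  derivable_pt_lim (fun t => f t * g t) x (a * g x + f x * b).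
Proof. apply derivable_pt_lim_mult. Qed.

Lemma dlin (a k : R) : derivable_pt_lim (fun t => a + t * k) 0 k.
Proof.
  eapply dl_ext.
  - apply dplus; [apply derivable_pt_lim_const|].
    apply dmul; [apply derivable_pt_lim_id | apply derivable_pt_lim_const].
  - unfold id; ring.
Qed.

Definition Cderiv (f : R -> C) (d : C) : Prop :=
  derivable_pt_lim (fun t => fst (f t)) 0 (fst d) /\
  derivable_pt_lim (fun t => snd (f t)) 0 (snd d).

Lemma Cderiv_const (c : C) : Cderiv (fun _ => c) (0, 0).
Proof. split; apply derivable_pt_lim_const. Qed.

Lemma Cderiv_lin (a b k1 k2 : R) : Cderiv (fun t => (a + t * k1, b + t * k2)) (k1, k2).
Proof. split; apply dlin. Qed.

Lemma Cderiv_add (f g : R -> C) (df dg : C) : Cderiv f df -> Cderiv g dg ->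
  Cderiv (fun t => Cadd (f t) (g t)) (Cadd df dg).
Proof. intros [] []; split; simpl; apply dplus; auto. Qed.

Lemma Cderiv_mul (f g : R -> C) (df dg : C) : Cderiv f df -> Cderiv g dg ->
  Cderiv (fun t => Cmul (f t) (g t)) (Cadd (Cmul (f 0) dg) (Cmul df (g 0))).
Proof.
  intros [] []; split; simpl.
  - eapply dl_ext; [apply dminus; apply dmul; eauto | cbv beta; ring].
  - eapply dl_ext; [apply dplus; apply dmul; eauto | cbv beta; ring].
Qed.

Lemma Cderiv_conj (f : R -> C) (df : C) : Cderiv f df -> Cderiv (fun t => Cconj (f t)) (Cconj df).
Proof. intros []; split; simpl; [|apply dopp]; auto. Qed.

Lemma Cderiv_ext (f : R -> C) (d d' : C) : Cderiv f d -> d = d' -> Cderiv f d'.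
Proof. now intros ? <-. Qed.

Lemma Cderiv_pow (f : R -> C) (df : C) (n : nat) : Cderiv f df ->
  Cderiv (fun t => Cpow (f t) n) (Cmul (INR n, 0) (Cmul (Cpow (f 0) (pred n)) df)).
Proof.
  intros Hf; induction n as [|n IH]; simpl Cpow.
  - eapply Cderiv_ext; [apply Cderiv_const|].
    destruct df; unfold Cmul; simpl; apply pair_eq; ring.
  - eapply Cderiv_ext; [apply (Cderiv_mul f (fun t => Cpow (f t) n)); eauto|].
    rewrite S_INR; destruct n as [|n]; simpl Cpow; simpl pred;
      [|destruct (Cpow (f 0) n)]; destruct (f 0), df;
      unfold Cadd, Cmul; cbn [fst snd]; rewrite ?INR_0; apply pair_eq; ring.
Qed.

Definition Kder (l m : nat) (w0 z0 dw dz : C) : C :=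
  Cadd (Cmul (INR l, 0) (Cmul (Cpow z0 (pred l)) dz))
       (Cadd (Cmul (Cconj z0) (Cmul (INR m, 0) (Cmul (Cpow w0 (pred m)) dw)))
             (Cmul (Cconj dz) (Cpow w0 m))).

Lemma Cderiv_Kmap (l m : nat) (w z : R -> C) (dw dz : C) : Cderiv w dw -> Cderiv z dz ->
  Cderiv (fun t => Kmap l m (w t) (z t)) (Kder l m (w 0) (z 0) dw dz).
Proof.
  intros Hw Hz; unfold Kmap.
  eapply Cderiv_ext.
  - apply (Cderiv_add (fun t => Cpow (z t) l) (fun t => Cmul (Cconj (z t)) (Cpow (w t) m))).
    + apply Cderiv_pow, Hz.
    + apply (Cderiv_mul (fun t => Cconj (z t)) (fun t => Cpow (w t) m)).
      * apply Cderiv_conj, Hz.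
      * apply Cderiv_pow, Hw.
  - unfold Kder; destruct (Cpow (w 0) m), (z 0), dz; unfold Cadd, Cmul, Cconj; simpl.
    apply pair_eq; ring.
Qed.

Lemma norm4_eq (v : R4) :
  norm4 v = sqrt (c0 v * c0 v + c1 v * c1 v + c2 v * c2 v + c3 v * c3 v).
Proof. unfold norm4; simpl; f_equal; ring. Qed.

Lemma norm4_nonneg (v : R4) : 0 <= norm4 v.
Proof. apply sqrt_pos. Qed.

Lemma coord_le (v : R4) (i : nat) : Rabs (coord v i) <= norm4 v.
Proof.
  assert (Hsq : forall x y, x * x <= y -> Rabs x <= sqrt y).
  { intros x y H; rewrite <- sqrt_Rsqr_abs; apply sqrt_le_1_alt; unfold Rsqr; lra. }
  rewrite norm4_eq; destruct i as [|[|[|[|i]]]]; simpl; apply Hsq; nra.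
Qed.

Lemma norm4_le_sum (v : R4) : norm4 v <= Rabs (c0 v) + Rabs (c1 v) + Rabs (c2 v) + Rabs (c3 v).
Proof.
  rewrite norm4_eq.
  assert (E : forall x, x * x = Rabs x * Rabs x)
    by (intro x; pose proof (Rsqr_abs x); unfold Rsqr in *; lra).
  pose proof (Rabs_pos (c0 v)); pose proof (Rabs_pos (c1 v));
    pose proof (Rabs_pos (c2 v)); pose proof (Rabs_pos (c3 v)).
  rewrite <- sqrt_square by lra; apply sqrt_le_1_alt.
  rewrite (E (c0 v)), (E (c1 v)), (E (c2 v)), (E (c3 v)); nra.
Qed.

Definition dot (d h : R4) : R := c0 d * c0 h + c1 d * c1 h + c2 d * c2 h + c3 d * c3 h.

Definition l1norm (d : R4) : R := Rabs (c0 d) + Rabs (c1 d) + Rabs (c2 d) + Rabs (c3 d).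

Lemma l1norm_nonneg (d : R4) : 0 <= l1norm d.
Proof.
  unfold l1norm; pose proof (Rabs_pos (c0 d)); pose proof (Rabs_pos (c1 d));
    pose proof (Rabs_pos (c2 d)); pose proof (Rabs_pos (c3 d)); lra.
Qed.

Lemma dot_bound (d h : R4) : Rabs (dot d h) <= l1norm d * norm4 h.
Proof.
  assert (Hi : forall i, Rabs (coord d i * coord h i) <= Rabs (coord d i) * norm4 h)
    by (intro i; rewrite Rabs_mult; apply Rmult_le_compat_l; [apply Rabs_pos | apply coord_le]).
  pose proof (Hi 0%nat); pose proof (Hi 1%nat); pose proof (Hi 2%nat); pose proof (Hi 3%nat).
  simpl in *; unfold dot, l1norm.
  pose proof (Rabs_triang (c0 d * c0 h + c1 d * c1 h + c2 d * c2 h) (c3 d * c3 h)).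
  pose proof (Rabs_triang (c0 d * c0 h + c1 d * c1 h) (c2 d * c2 h)).
  pose proof (Rabs_triang (c0 d * c0 h) (c1 d * c1 h)).
  lra.
Qed.

(** Polynomial functions of the coordinates are differentiable
    everywhere; this is all the differentiability the theorem needs. *)
Definition FD1 (g : R4 -> R) (x d : R4) : Prop :=
  forall eps, 0 < eps -> exists delta, 0 < delta /\
    forall h, norm4 h < delta -> Rabs (g (vadd x h) - g x - dot d h) <= eps * norm4 h.

Definition FD1ex (g : R4 -> R) (x : R4) : Prop := exists d, FD1 g x d.

Lemma FD1ex_ext (g g' : R4 -> R) (x : R4) :
  (forall p, g p = g' p) -> FD1ex g x -> FD1ex g' x.
Proof.
  intros E [d H]; exists d; intros eps He.
  destruct (H eps He) as [delta [Hd K]]; exists delta; split; [assumption|].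
  intros h Hh; rewrite <- !E; auto.
Qed.

Lemma FD1_affine (g : R4 -> R) (x d : R4) :
  (forall h, g (vadd x h) - g x - dot d h = 0) -> FD1 g x d.
Proof.
  intros H eps He; exists 1; split; [lra|]; intros h _.
  rewrite H, Rabs_R0; pose proof (norm4_nonneg h); nra.
Qed.

Lemma FD1ex_const (a : R) (x : R4) : FD1ex (fun _ => a) x.
Proof. exists zero4; apply FD1_affine; intros; unfold dot; simpl; ring. Qed.

Lemma FD1ex_coord (i : nat) (x : R4) : (i < 4)%nat -> FD1ex (fun p => coord p i) x.
Proof.
  intros Hi; exists (basis i); apply FD1_affine; intros h.
  destruct i as [|[|[|[|i]]]]; try lia; unfold dot; simpl; ring.
Qed.

Lemma FD1ex_lin (g1 g2 : R4 -> R) (a b : R) (x : R4) : FD1ex g1 x -> FD1ex g2 x ->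
  FD1ex (fun p => a * g1 p + b * g2 p) x.
Proof.
  intros [d1 H1] [d2 H2].
  exists (mkR4 (a * c0 d1 + b * c0 d2) (a * c1 d1 + b * c1 d2)
               (a * c2 d1 + b * c2 d2) (a * c3 d1 + b * c3 d2)).
  intros eps He.
  pose proof (Rabs_pos a); pose proof (Rabs_pos b).
  set (e := eps / (Rabs a + Rabs b + 1)).
  assert (He1 : 0 < e) by (unfold e; apply Rdiv_lt_0_compat; lra).
  assert (Ee : e * (Rabs a + Rabs b + 1) = eps) by (unfold e; field; lra).
  destruct (H1 e He1) as [dl1 [Hd1 K1]], (H2 e He1) as [dl2 [Hd2 K2]].
  exists (Rmin dl1 dl2); split; [now apply Rmin_glb_lt|].
  intros h Hh; pose proof (Rmin_l dl1 dl2); pose proof (Rmin_r dl1 dl2).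
  specialize (K1 h ltac:(lra)); specialize (K2 h ltac:(lra)).
  set (r1 := g1 (vadd x h) - g1 x - dot d1 h) in *.
  set (r2 := g2 (vadd x h) - g2 x - dot d2 h) in *.
  match goal with |- Rabs ?r <= _ =>
    replace r with (a * r1 + b * r2) by (unfold r1, r2, dot; simpl; ring) end.
  pose proof (Rabs_triang (a * r1) (b * r2)); rewrite !Rabs_mult in *.
  pose proof (Rmult_le_compat_l _ _ _ (Rabs_pos a) K1).
  pose proof (Rmult_le_compat_l _ _ _ (Rabs_pos b) K2).
  pose proof (norm4_nonneg h); nra.
Qed.

Lemma FD1ex_add (g1 g2 : R4 -> R) (x : R4) : FD1ex g1 x -> FD1ex g2 x ->
  FD1ex (fun p => g1 p + g2 p) x.
Proof.
  intros; apply (FD1ex_ext (fun p => 1 * g1 p + 1 * g2 p)); [intros; ring|].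
  now apply FD1ex_lin.
Qed.

Lemma FD1ex_sub (g1 g2 : R4 -> R) (x : R4) : FD1ex g1 x -> FD1ex g2 x ->
  FD1ex (fun p => g1 p - g2 p) x.
Proof.
  intros; apply (FD1ex_ext (fun p => 1 * g1 p + -1 * g2 p)); [intros; ring|].
  now apply FD1ex_lin.
Qed.

Lemma FD1ex_opp (g : R4 -> R) (x : R4) : FD1ex g x -> FD1ex (fun p => - g p) x.
Proof.
  intros; apply (FD1ex_ext (fun p => -1 * g p + 0 * g p)); [intros; ring|].
  now apply FD1ex_lin.
Qed.

(** The estimate behind the product rule: if E, F are the remainders of two
    functions with linear parts D1, D2 at a step of size n, the remainder of
    the product, a F + b E + (D1 + E)(D2 + F), is O(e n) + O(n^2). *)
Lemma product_remainder_bound (a b D1 D2 E F M1 M2 e n : R) :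
  0 <= n -> e <= 1 -> Rabs E <= e * n -> Rabs F <= e * n ->
  Rabs D1 <= M1 * n -> Rabs D2 <= M2 * n ->
  Rabs (a * F + b * E + (D1 + E) * (D2 + F)) <=
  (Rabs a + Rabs b) * (e * n) + ((M1 + 1) * (M2 + 1) * n) * n.
Proof.
  intros Hn He HE HF H1 H2.
  pose proof (Rabs_pos a); pose proof (Rabs_pos b).
  assert (T1 : Rabs (a * F) <= Rabs a * (e * n))
    by (rewrite Rabs_mult; apply Rmult_le_compat_l; auto).
  assert (T2 : Rabs (b * E) <= Rabs b * (e * n))
    by (rewrite Rabs_mult; apply Rmult_le_compat_l; auto).
  assert (T3 : Rabs (D1 + E) <= (M1 + 1) * n)
    by (eapply Rle_trans; [apply Rabs_triang | nra]).
  assert (T4 : Rabs (D2 + F) <= (M2 + 1) * n)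
    by (eapply Rle_trans; [apply Rabs_triang | nra]).
  assert (T5 : Rabs ((D1 + E) * (D2 + F)) <= ((M1 + 1) * (M2 + 1) * n) * n).
  { rewrite Rabs_mult.
    replace ((M1 + 1) * (M2 + 1) * n * n) with (((M1 + 1) * n) * ((M2 + 1) * n)) by ring.
    apply Rmult_le_compat; auto using Rabs_pos. }
  pose proof (Rabs_triang (a * F + b * E) ((D1 + E) * (D2 + F))).
  pose proof (Rabs_triang (a * F) (b * E)).
  lra.
Qed.

Lemma FD1ex_mul (g1 g2 : R4 -> R) (x : R4) : FD1ex g1 x -> FD1ex g2 x ->
  FD1ex (fun p => g1 p * g2 p) x.
Proof.
  intros [d1 H1] [d2 H2].
  exists (mkR4 (g1 x * c0 d2 + g2 x * c0 d1) (g1 x * c1 d2 + g2 x * c1 d1)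
               (g1 x * c2 d2 + g2 x * c2 d1) (g1 x * c3 d2 + g2 x * c3 d1)).
  intros eps He.
  pose proof (Rabs_pos (g1 x)); pose proof (Rabs_pos (g2 x)).
  pose proof (l1norm_nonneg d1); pose proof (l1norm_nonneg d2).
  set (G := Rabs (g1 x) + Rabs (g2 x) + 1).
  set (M := (l1norm d1 + 1) * (l1norm d2 + 1)).
  assert (HG : 0 < G) by (unfold G; lra).
  assert (HM : 0 < M) by (unfold M; nra).
  set (e := Rmin 1 (eps / (2 * G))).
  assert (He1 : 0 < e) by (apply Rmin_glb_lt; [lra | apply Rdiv_lt_0_compat; lra]).
  assert (HeG : G * e <= eps / 2).
  { replace (eps / 2) with (G * (eps / (2 * G))) by (field; lra).
    apply Rmult_le_compat_l; [lra | apply Rmin_r]. }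
  destruct (H1 e He1) as [dl1 [Hd1 K1]], (H2 e He1) as [dl2 [Hd2 K2]].
  set (dl3 := eps / (2 * M)).
  assert (Hd3 : 0 < dl3) by (apply Rdiv_lt_0_compat; lra).
  exists (Rmin (Rmin dl1 dl2) dl3); split; [repeat apply Rmin_glb_lt; lra|].
  intros h Hh.
  pose proof (Rmin_l (Rmin dl1 dl2) dl3); pose proof (Rmin_r (Rmin dl1 dl2) dl3).
  pose proof (Rmin_l dl1 dl2); pose proof (Rmin_r dl1 dl2).
  specialize (K1 h ltac:(lra)); specialize (K2 h ltac:(lra)).
  assert (HMn : M * norm4 h <= eps / 2).
  { replace (eps / 2) with (M * dl3) by (unfold dl3; field; lra).
    apply Rmult_le_compat_l; lra. }
  pose proof (norm4_nonneg h).
  pose proof (product_remainder_bound (g1 x) (g2 x) (dot d1 h) (dot d2 h)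
    _ _ (l1norm d1) (l1norm d2) e (norm4 h) ltac:(assumption) (Rmin_l _ _) K1 K2
    (dot_bound d1 h) (dot_bound d2 h)) as B.
  match goal with |- Rabs ?r <= _ => match type of B with Rabs ?r' <= _ =>
    replace r with r' by (unfold dot; simpl; ring) end end.
  fold M in B; unfold G in HeG; nra.
Qed.

Definition CFD (f : R4 -> C) (x : R4) : Prop :=
  FD1ex (fun p => fst (f p)) x /\ FD1ex (fun p => snd (f p)) x.

Lemma CFD_coords (i : nat) (x : R4) : (i < 3)%nat ->
  CFD (fun p => (coord p i, coord p (S i))) x.
Proof. intros Hi; split; apply FD1ex_coord; lia. Qed.

Lemma CFD_const (c : C) (x : R4) : CFD (fun _ => c) x.
Proof. split; apply FD1ex_const. Qed.

Lemma CFD_add (f g : R4 -> C) (x : R4) : CFD f x -> CFD g x -> CFD (fun p => Cadd (f p) (g p)) x.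
Proof. intros [] []; split; simpl; apply FD1ex_add; auto. Qed.

Lemma CFD_mul (f g : R4 -> C) (x : R4) : CFD f x -> CFD g x -> CFD (fun p => Cmul (f p) (g p)) x.
Proof.
  intros [] []; split; simpl.
  - apply (FD1ex_sub (fun p => fst (f p) * fst (g p)) (fun p => snd (f p) * snd (g p)));
      apply FD1ex_mul; auto.
  - apply (FD1ex_add (fun p => fst (f p) * snd (g p)) (fun p => snd (f p) * fst (g p)));
      apply FD1ex_mul; auto.
Qed.

Lemma CFD_conj (f : R4 -> C) (x : R4) : CFD f x -> CFD (fun p => Cconj (f p)) x.
Proof. intros []; split; simpl; [|apply (FD1ex_opp (fun p => snd (f p)))]; auto. Qed.

Lemma CFD_pow (f : R4 -> C) (x : R4) (n : nat) : CFD f x -> CFD (fun p => Cpow (f p) n) x.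
Proof.
  intros H; induction n as [|n IH]; simpl.
  - apply CFD_const.
  - now apply (CFD_mul f (fun p => Cpow (f p) n)).
Qed.

Lemma FDeriv_of_coords (f : R4 -> R4) (x : R4) :
  FD1ex (fun p => c0 (f p)) x -> FD1ex (fun p => c1 (f p)) x ->
  FD1ex (fun p => c2 (f p)) x -> FD1ex (fun p => c3 (f p)) x -> exists J, FDeriv f x J.
Proof.
  intros [d0 H0] [d1 H1] [d2 H2] [d3 H3].
  set (row := fun i => match i with 0%nat => d0 | 1%nat => d1 | 2%nat => d2 | _ => d3 end).
  exists (fun i j => coord (row i) j).
  intros eps He; assert (He4 : 0 < eps / 4) by lra.
  destruct (H0 _ He4) as [e0 [He0 K0]], (H1 _ He4) as [e1 [He1 K1]],
           (H2 _ He4) as [e2 [He2 K2]], (H3 _ He4) as [e3 [He3 K3]].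
  exists (Rmin (Rmin e0 e1) (Rmin e2 e3)); split; [repeat apply Rmin_glb_lt; lra|].
  intros h Hh.
  pose proof (Rmin_l (Rmin e0 e1) (Rmin e2 e3)); pose proof (Rmin_r (Rmin e0 e1) (Rmin e2 e3)).
  pose proof (Rmin_l e0 e1); pose proof (Rmin_r e0 e1); pose proof (Rmin_l e2 e3); pose proof (Rmin_r e2 e3).
  specialize (K0 h ltac:(lra)); specialize (K1 h ltac:(lra));
    specialize (K2 h ltac:(lra)); specialize (K3 h ltac:(lra)).
  eapply Rle_trans; [apply norm4_le_sum|].
  assert (Erow : forall d, 0 + c0 d * c0 h + c1 d * c1 h + c2 d * c2 h + c3 d * c3 h = dot d h)
    by (intro; unfold dot; ring).
  unfold vsub, mulv, ofFun, row; simpl; rewrite !Erow; lra.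
Qed.

Lemma vadd_scale0 (x v : R4) : vadd x (vscale 0 v) = x.
Proof. destruct x; unfold vadd, vscale, ofFun; simpl; f_equal; ring. Qed.

Lemma FDeriv_partial (f : R4 -> R4) (x : R4) (J : Mat) (i j : nat) :
  (i < 4)%nat -> (j < 4)%nat -> FDeriv f x J ->
  derivable_pt_lim (fun t => coord (f (vadd x (vscale t (basis j)))) i) 0 (J i j).
Proof.
  intros Hi Hj HF eps He.
  destruct (HF (eps / 2) ltac:(lra)) as [d [Hd K]].
  exists (mkposreal d Hd); intros t Ht0 Ht; simpl in Ht.
  rewrite Rplus_0_l, vadd_scale0.
  set (h := vscale t (basis j)).
  assert (Hh : norm4 h = Rabs t).
  { unfold h; rewrite norm4_eq, <- sqrt_Rsqr_abs; unfold Rsqr; f_equal.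
    destruct j as [|[|[|[|j]]]]; simpl; try ring; lia. }
  assert (Hmul : coord (mulv J h) i = J i j * t).
  { unfold h; destruct i as [|[|[|[|i]]]]; try lia;
      destruct j as [|[|[|[|j]]]]; try lia; simpl; ring. }
  specialize (K h ltac:(lra)).
  pose proof (coord_le (vsub (vsub (f (vadd x h)) (f x)) (mulv J h)) i) as Ci.
  assert (Ecoord : forall u v, coord (vsub u v) i = coord u i - coord v i)
    by (intros; destruct i as [|[|[|[|i]]]]; simpl; ring).
  rewrite !Ecoord, Hmul in Ci.
  assert (Ht1 : 0 < Rabs t) by (apply Rabs_pos_lt; auto).
  replace ((coord (f (vadd x h)) i - coord (f x) i) / t - J i j)
    with ((coord (f (vadd x h)) i - coord (f x) i - J i j * t) / t) by (field; auto).
  unfold Rdiv; rewrite Rabs_mult, Rabs_inv.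
  apply (Rmult_lt_reg_r (Rabs t)); [assumption|].
  rewrite Rmult_assoc, Rinv_l by lra; nra.
Qed.

Lemma FDeriv_entry (f : R4 -> R4) (x : R4) (J : Mat) (i j : nat) (v : R) :
  (i < 4)%nat -> (j < 4)%nat -> FDeriv f x J ->
  derivable_pt_lim (fun t => coord (f (vadd x (vscale t (basis j)))) i) 0 v -> J i j = v.
Proof. intros Hi Hj HF Hv; eapply uniqueness_limite; [apply FDeriv_partial|]; eauto. Qed.

(** n-th roots of complex numbers, via polar form and de Moivre. *)

Lemma sum_sq_pos (a b : R) : (a, b) <> (0, 0) -> 0 < a * a + b * b.
Proof. intros Hab; destruct (Req_dec a 0), (Req_dec b 0); subst; try nra; now destruct Hab. Qed.

Lemma polar (a b : R) : (a, b) <> (0, 0) ->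
  exists th, a = sqrt (a * a + b * b) * cos th /\ b = sqrt (a * a + b * b) * sin th.
Proof.
  intros Hab; set (r := sqrt (a * a + b * b)).
  pose proof (sum_sq_pos a b Hab) as Hpos.
  assert (Hr : 0 < r) by (apply sqrt_lt_R0; auto).
  assert (Hr2 : r * r = a * a + b * b) by (apply sqrt_sqrt; lra).
  set (u := a / r).
  assert (Hu : -1 <= u <= 1).
  { assert (u * u <= 1); [|split; nra].
    unfold u; replace (a / r * (a / r)) with (a * a / (r * r)) by (field; lra).
    rewrite Hr2; apply Rmult_le_reg_r with (a * a + b * b); [assumption|].
    unfold Rdiv; rewrite Rmult_assoc, Rinv_l by lra; nra. }
  assert (Hs : sqrt (1 - u²) = Rabs b / r).
  { replace (1 - u²) with ((b / r)²).
    - rewrite sqrt_Rsqr_abs; unfold Rdiv; rewrite Rabs_mult, Rabs_inv, (Rabs_right r) by lra; auto.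
    - unfold u, Rsqr; apply Rmult_eq_reg_r with (r * r); [|nra].
      replace (b / r * (b / r) * (r * r)) with (b * b) by (field; lra).
      replace ((1 - a / r * (a / r)) * (r * r)) with (r * r - a * a) by (field; lra); lra. }
  destruct (Rle_dec 0 b).
  - exists (acos u); rewrite cos_acos, sin_acos by auto; rewrite Hs, Rabs_right by lra.
    unfold u; split; field; lra.
  - exists (- acos u); rewrite cos_neg, sin_neg, cos_acos, sin_acos by auto.
    rewrite Hs, Rabs_left by lra; unfold u; split; field; lra.
Qed.

Lemma de_moivre (r t : R) (n : nat) :
  Cpow (r * cos t, r * sin t) n = (r ^ n * cos (INR n * t), r ^ n * sin (INR n * t)).
Proof.
  induction n as [|n IH].
  - simpl; rewrite Rmult_0_l, cos_0, sin_0; apply pair_eq; ring.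
  - simpl Cpow; rewrite IH, S_INR.
    replace ((INR n + 1) * t) with (t + INR n * t) by ring.
    rewrite cos_plus, sin_plus; unfold Cmul; simpl; apply pair_eq; ring.
Qed.

Lemma same_angle (A B : R) : cos A = cos B -> sin A = sin B ->
  exists q : Z, A - B = 2 * IZR q * PI.
Proof.
  intros Hc Hs.
  assert (H1 : cos (A - B) = 1).
  { rewrite cos_minus, Hc, Hs; pose proof (sin2_cos2 B); unfold Rsqr in *; lra. }
  replace (A - B) with (2 * ((A - B) / 2)) in H1 by field; rewrite cos_2a_sin in H1.
  assert (sin ((A - B) / 2) = 0) as H0 by nra.
  destruct (sin_eq_0_0 _ H0) as [q Hq]; exists q; lra.
Qed.

Lemma cos_sin_shift (x : R) (t : Z) :
  cos (x + 2 * IZR t * PI) = cos x /\ sin (x + 2 * IZR t * PI) = sin x.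
Proof.
  assert (S0 : sin (2 * IZR t * PI) = 0)
    by (apply sin_eq_0_1; exists (2 * t)%Z; rewrite mult_IZR; simpl; ring).
  assert (C1 : cos (2 * IZR t * PI) = 1).
  { replace (2 * IZR t * PI) with (2 * (IZR t * PI)) by ring; rewrite cos_2a_sin.
    rewrite sin_eq_0_1 by (exists t; auto); ring. }
  rewrite cos_plus, sin_plus, S0, C1; split; ring.
Qed.

Definition nthroot (r : R) (n : nat) : R := Rpower r (/ INR n).

Lemma nthroot_pos (r : R) (n : nat) : 0 < nthroot r n.
Proof. apply exp_pos. Qed.

Lemma nthroot_pow (r : R) (n : nat) : 0 < r -> (1 <= n)%nat -> nthroot r n ^ n = r.
Proof.
  intros Hr Hn; assert (0 < INR n) by (apply lt_0_INR; lia).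
  rewrite <- Rpower_pow by apply nthroot_pos; unfold nthroot.
  rewrite Rpower_mult, Rinv_l by lra; now apply Rpower_1.
Qed.

Lemma nthroot_of_pow (s : R) (n : nat) : 0 < s -> (1 <= n)%nat -> nthroot (s ^ n) n = s.
Proof.
  intros Hs Hn; assert (0 < INR n) by (apply lt_0_INR; lia).
  unfold nthroot; rewrite <- Rpower_pow, Rpower_mult, Rinv_r by lra; now apply Rpower_1.
Qed.

Section NthRoots.
Variables (n : nat) (rho th : R).
Hypothesis (Hn : (1 <= n)%nat) (Hrho : 0 < rho).

Definition root_angle (k : nat) : R := (th + 2 * INR k * PI) / INR n.
Definition root (k : nat) : C :=
  (nthroot rho n * cos (root_angle k), nthroot rho n * sin (root_angle k)).

Lemma INR_n_pos : 0 < INR n.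
Proof. apply lt_0_INR; lia. Qed.

Lemma root_pow (k : nat) : Cpow (root k) n = (rho * cos th, rho * sin th).
Proof.
  pose proof INR_n_pos.
  unfold root; rewrite de_moivre, nthroot_pow by auto.
  replace (INR n * root_angle k) with (th + 2 * INR k * PI) by (unfold root_angle; field; lra).
  now rewrite cos_period, sin_period.
Qed.

Lemma root_inj (j k : nat) : (j < n)%nat -> (k < n)%nat -> root j = root k -> j = k.
Proof.
  intros Hj Hk E; pose proof INR_n_pos; pose proof PI_RGT_0; pose proof (nthroot_pos rho n).
  unfold root in E; injection E as E1 E2.
  apply Rmult_eq_reg_l in E1, E2; try lra.
  destruct (same_angle _ _ E1 E2) as [q Hq].
  assert (Hq2 : INR j - INR k = IZR q * INR n).
  { apply Rmult_eq_reg_r with (2 * PI / INR n); [|apply Rgt_not_eq, Rdiv_lt_0_compat; lra].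
    replace ((INR j - INR k) * (2 * PI / INR n)) with (root_angle j - root_angle k)
      by (unfold root_angle; field; lra).
    rewrite Hq; field; lra. }
  rewrite !INR_IZR_INZ, <- minus_IZR, <- mult_IZR in Hq2; apply eq_IZR in Hq2.
  assert (q = 0%Z) by (destruct (Z.lt_trichotomy q 0) as [Q|[Q|Q]]; nia).
  subst q; lia.
Qed.

Lemma root_complete (z : C) : Cpow z n = (rho * cos th, rho * sin th) ->
  exists k, (k < n)%nat /\ z = root k.
Proof.
  intros Hz; pose proof INR_n_pos; pose proof PI_RGT_0.
  destruct z as [x y].
  assert (Hxy : (x, y) <> (0, 0)).
  { intros E; rewrite E, Cpow_0 in Hz by lia; injection Hz as H1 H2.
    pose proof (sin2_cos2 th); unfold Rsqr in *; nra. }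
  destruct (polar x y Hxy) as [ph [Hx Hy]].
  set (s := sqrt (x * x + y * y)) in *.
  assert (Hs : 0 < s) by (apply sqrt_lt_R0, sum_sq_pos, Hxy).
  rewrite Hx, Hy, de_moivre in Hz; injection Hz as Ez1 Ez2.
  assert (Hsn : s ^ n = rho).
  { pose proof (pow_lt s n Hs).
    assert (Hsq : s ^ n * s ^ n = rho * rho).
    { pose proof (sin2_cos2 (INR n * ph)); pose proof (sin2_cos2 th); unfold Rsqr in *.
      transitivity ((s ^ n * cos (INR n * ph)) * (s ^ n * cos (INR n * ph))
                    + (s ^ n * sin (INR n * ph)) * (s ^ n * sin (INR n * ph))); [nra|].
      rewrite Ez1, Ez2; nra. }
    nra. }
  rewrite Hsn in Ez1, Ez2; apply Rmult_eq_reg_l in Ez1, Ez2; try lra.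
  destruct (same_angle _ _ Ez1 Ez2) as [q Hq].
  pose proof (Z.mod_pos_bound q (Z.of_nat n) ltac:(lia)) as Hmod.
  pose proof (Z.div_mod q (Z.of_nat n) ltac:(lia)) as Hdm.
  set (t := (q / Z.of_nat n)%Z) in *; set (r := (q mod Z.of_nat n)%Z) in *.
  exists (Z.to_nat r); split; [lia|].
  assert (Hk : INR (Z.to_nat r) = IZR r) by (rewrite INR_IZR_INZ; f_equal; lia).
  assert (Hph : ph = root_angle (Z.to_nat r) + 2 * IZR t * PI).
  { unfold root_angle; rewrite Hk.
    assert (Hqr : IZR q = INR n * IZR t + IZR r)
      by (rewrite Hdm at 1; rewrite plus_IZR, mult_IZR, <- INR_IZR_INZ; ring).
    apply Rmult_eq_reg_l with (INR n); [|lra].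
    replace (INR n * ((th + 2 * IZR r * PI) / INR n + 2 * IZR t * PI))
      with (th + 2 * (INR n * IZR t + IZR r) * PI) by (field; lra).
    rewrite <- Hqr; lra. }
  unfold root; rewrite Hx, Hy, Hph, <- Hsn, nthroot_of_pow by auto.
  destruct (cos_sin_shift (root_angle (Z.to_nat r)) t) as [-> ->]; reflexivity.
Qed.

End NthRoots.

Lemma nth_roots (n : nat) (c : C) : (1 <= n)%nat -> (c <> (0, 0) \/ n = 1%nat) ->
  exists L : list C, length L = n /\ NoDup L /\ forall z, In z L <-> Cpow z n = c.
Proof.
  intros Hn Hc; destruct (Nat.eq_dec n 1) as [->|N1].
  { exists (c :: nil); split; [reflexivity|]; split; [repeat constructor; simpl; tauto|].
    intros z; rewrite Cpow_1; simpl; intuition. }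
  destruct Hc as [Hc|]; [|lia]; destruct c as [a b].
  destruct (polar a b Hc) as [th [Ha Hb]].
  set (rho := sqrt (a * a + b * b)) in *.
  assert (Hrho : 0 < rho) by (apply sqrt_lt_R0, sum_sq_pos, Hc).
  exists (map (root n rho th) (seq 0 n)); split; [now rewrite length_map, length_seq|]; split.
  - apply Injective_map_NoDup_in; [|apply seq_NoDup].
    intros j k Hj Hk; rewrite in_seq in Hj, Hk; apply (root_inj n rho th); auto; lia.
  - assert (Eab : (a, b) = (rho * cos th, rho * sin th)) by now rewrite <- Ha, <- Hb.
    intros z; rewrite in_map_iff, Eab; split.
    + intros [k [<- _]]; now apply root_pow.
    + intros Hz; destruct (root_complete n rho th Hn Hrho z Hz) as [k [Hk ->]].
      exists k; split; [reflexivity|]; rewrite in_seq; lia.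
Qed.

Lemma nth_root_exists (n : nat) (c : C) : (1 <= n)%nat -> exists z, Cpow z n = c.
Proof.
  intros Hn; destruct (C_eq0_dec c) as [->|Hc].
  - exists (0, 0); now apply Cpow_0.
  - destruct (nth_roots n c Hn (or_introl Hc)) as [[|z L] [HL [_ HI]]]; simpl in HL; [lia|].
    exists z; apply HI; now left.
Qed.

Lemma fold_zero (f : nat -> R) (cols : list nat) : (forall j, In j cols -> f j = 0) ->
  fold_right Rplus 0 (map f cols) = 0.
Proof. induction cols as [|j cols IH]; simpl; intros H; auto; rewrite H, IH by auto; ring. Qed.

Lemma zero_col_dep (J : Mat) (cols : list nat) (k : nat) : In k cols ->
  (forall i, (i < 4)%nat -> J i k = 0) -> ~ cols_indep J cols.
Proof.
  intros Hk H0 HI.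
  assert (E : (fun j => if Nat.eqb j k then 1 else 0) k = 0).
  { apply (HI (fun j => if Nat.eqb j k then 1 else 0)); auto; intros i Hi; apply fold_zero; intros j _.
    destruct (Nat.eqb_spec j k) as [->|]; [rewrite H0 by auto|]; ring. }
  simpl in E; rewrite Nat.eqb_refl in E; lra.
Qed.

Lemma three_cols_meet_01 (cols : list nat) : length cols = 3%nat -> valid_cols cols ->
  In 0%nat cols \/ In 1%nat cols.
Proof.
  intros Hl [Hnd Hf].
  destruct cols as [|a [|b [|c [|d cols]]]]; simpl in Hl; try lia.
  inversion Hf as [|? ? Ha Hf1]; inversion Hf1 as [|? ? Hb Hf2];
    inversion Hf2 as [|? ? Hc _]; subst.
  inversion Hnd as [|? ? Hn1 Hnd1]; inversion Hnd1 as [|? ? Hn2 _]; subst.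
  simpl in *; lia.
Qed.

Section RankCriterion.
Variable J : Mat.
Hypothesis (J00 : J 0%nat 0%nat = 0) (J01 : J 0%nat 1%nat = 0)
           (J10 : J 1%nat 0%nat = 0) (J11 : J 1%nat 1%nat = 0)
           (J02 : J 0%nat 2%nat = 1) (J03 : J 0%nat 3%nat = 0)
           (J12 : J 1%nat 2%nat = 0) (J13 : J 1%nat 3%nat = 1).

Lemma valid_k23 (k : nat) : (k = 0 \/ k = 1)%nat -> valid_cols (k :: 2 :: 3 :: nil)%nat.
Proof.
  intros Hk; split.
  - repeat constructor; simpl; lia.
  - apply Forall_forall; intros x Hx; simpl in Hx; lia.
Qed.

Lemma indep_k23 (k : nat) : (k = 0 \/ k = 1)%nat -> (J 2%nat k <> 0 \/ J 3%nat k <> 0) ->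
  cols_indep J (k :: 2 :: 3 :: nil)%nat.
Proof.
  intros Hk Hnz c Hc.
  pose proof (Hc 0%nat ltac:(lia)) as E0; pose proof (Hc 1%nat ltac:(lia)) as E1.
  pose proof (Hc 2%nat ltac:(lia)) as E2; pose proof (Hc 3%nat ltac:(lia)) as E3.
  assert (Hk0 : J 0%nat k = 0 /\ J 1%nat k = 0) by (destruct Hk; subst; auto).
  simpl in E0, E1, E2, E3; destruct Hk0 as [A0 A1].
  rewrite A0, J02, J03 in E0; rewrite A1, J12, J13 in E1.
  assert (c 2%nat = 0) as C2 by lra; assert (c 3%nat = 0) as C3 by lra.
  rewrite C2, C3 in E2, E3.
  assert (c k = 0) by (destruct Hnz; nra).
  intros j [<-|[<-|[<-|[]]]]; auto.
Qed.

Lemma rank2_iff_cols01_zero :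
  rank4 J 2 <->
  (J 2%nat 0%nat = 0 /\ J 3%nat 0%nat = 0 /\ J 2%nat 1%nat = 0 /\ J 3%nat 1%nat = 0).
Proof.
  split.
  - intros [_ Hno].
    assert (Hz : forall k i, (k = 0 \/ k = 1)%nat -> (i = 2 \/ i = 3)%nat -> J i k = 0).
    { intros k i Hk Hi; destruct (Req_dec (J i k) 0) as [|N]; [assumption|].
      exfalso; apply (Hno (k :: 2 :: 3 :: nil)%nat); [reflexivity | now apply valid_k23|].
      apply indep_k23; [assumption|]; destruct Hi; subst; auto. }
    repeat split; apply Hz; auto.
  - intros (Z20 & Z30 & Z21 & Z31); split.
    + exists (2 :: 3 :: nil)%nat; split; [reflexivity|]; split.
      * split; [repeat constructor; simpl; lia|].
        apply Forall_forall; intros x Hx; simpl in Hx; lia.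
      * intros c Hc; pose proof (Hc 0%nat ltac:(lia)) as E0; pose proof (Hc 1%nat ltac:(lia)) as E1.
        simpl in E0, E1; rewrite J02, J03 in E0; rewrite J12, J13 in E1.
        intros k [<-|[<-|[]]]; lra.
    + intros cols Hl Hv.
      destruct (three_cols_meet_01 cols Hl Hv) as [H|H]; apply (zero_col_dep J cols _ H);
        intros [|[|[|[|i]]]] Hi; auto; lia.
Qed.

End RankCriterion.

Lemma CFD_Kmap (l m : nat) (p : R4) : CFD (fun q => Kmap l m (c2 q, c3 q) (c0 q, c1 q)) p.
Proof.
  pose proof (CFD_coords 0 p ltac:(lia)) as Hz; pose proof (CFD_coords 2 p ltac:(lia)) as Hw.
  apply (CFD_add (fun q => Cpow (c0 q, c1 q) l)
                 (fun q => Cmul (Cconj (c0 q, c1 q)) (Cpow (c2 q, c3 q) m))).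
  - now apply (CFD_pow (fun q => (c0 q, c1 q))).
  - apply (CFD_mul (fun q => Cconj (c0 q, c1 q)) (fun q => Cpow (c2 q, c3 q) m)).
    + now apply (CFD_conj (fun q => (c0 q, c1 q))).
    + now apply (CFD_pow (fun q => (c2 q, c3 q))).
Qed.

Lemma Tmap_differentiable (l m : nat) (p : R4) : exists J, FDeriv (Tmap l m) p J.
Proof.
  destruct (CFD_Kmap l m p) as [HA HB].
  apply FDeriv_of_coords; auto; [apply (FD1ex_coord 2) | apply (FD1ex_coord 3)]; lia.
Qed.

Lemma Tmap_jacobian (l m : nat) (p : R4) (J : Mat) : FDeriv (Tmap l m) p J ->
  let U := Cpow (c0 p, c1 p) (pred l) in
  let V := Cpow (c2 p, c3 p) m in
  (forall j, (j < 4)%nat -> J 0%nat j = coord (basis j) 2 /\ J 1%nat j = coord (basis j) 3) /\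
  J 2%nat 0%nat = INR l * fst U + fst V /\ J 3%nat 0%nat = INR l * snd U + snd V /\
  J 2%nat 1%nat = - (INR l * snd U) + snd V /\ J 3%nat 1%nat = INR l * fst U - fst V.
Proof.
  intros HF U V.
  assert (HK : forall j, (j < 4)%nat ->
    J 2%nat j = fst (Kder l m (c2 p, c3 p) (c0 p, c1 p) (coord (basis j) 2, coord (basis j) 3)
                         (coord (basis j) 0, coord (basis j) 1)) /\
    J 3%nat j = snd (Kder l m (c2 p, c3 p) (c0 p, c1 p) (coord (basis j) 2, coord (basis j) 3)
                         (coord (basis j) 0, coord (basis j) 1))).
  { intros j Hj.
    pose proof (Cderiv_Kmap l m _ _ _ _
                  (Cderiv_lin (c2 p) (c3 p) (coord (basis j) 2) (coord (basis j) 3))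
                  (Cderiv_lin (c0 p) (c1 p) (coord (basis j) 0) (coord (basis j) 1))) as [H2 H3].
    rewrite !Rmult_0_l, !Rplus_0_r in H2, H3.
    split; eapply FDeriv_entry; eauto; lia. }
  split; [|destruct (HK 0%nat ltac:(lia)) as [-> ->], (HK 1%nat ltac:(lia)) as [-> ->]].
  - intros j Hj; split; eapply FDeriv_entry; eauto; try lia; apply dlin.
  - unfold Kder, U, V; simpl coord.
    destruct (Cpow (c0 p, c1 p) (pred l)), (Cpow (c2 p, c3 p) m), (Cpow (c2 p, c3 p) (pred m)).
    unfold Cadd, Cmul, Cconj; simpl; repeat split; ring.
Qed.

Lemma Tmap_critical_iff (l m : nat) (p : R4) : (2 <= l)%nat -> (1 <= m)%nat ->
  let U := Cpow (c0 p, c1 p) (pred l) in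
  let V := Cpow (c2 p, c3 p) m in
  (INR l * fst U + fst V = 0 /\ INR l * snd U + snd V = 0 /\
   - (INR l * snd U) + snd V = 0 /\ INR l * fst U - fst V = 0) <-> p = zero4.
Proof.
  intros Hl Hm U V.
  assert (HL : 0 < INR l) by (apply lt_0_INR; lia).
  split.
  - intros (E1 & E2 & E3 & E4).
    assert (HU : U = (0, 0)) by (destruct U; simpl in *; apply pair_eq; nra).
    assert (HV : V = (0, 0)) by (destruct V; simpl in *; apply pair_eq; nra).
    apply Cpow_eq0 in HU, HV; destruct p; injection HU as -> ->; injection HV as -> ->.
    reflexivity.
  - intros ->; unfold U, V; simpl; rewrite !Cpow_0 by lia; simpl; repeat split; ring.
Qed.

Lemma Tmap_rank (l m : nat) (p : R4) (J : Mat) : (2 <= l)%nat -> (1 <= m)%nat ->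
  FDeriv (Tmap l m) p J -> (rank4 J 2 <-> p = zero4).
Proof.
  intros Hl Hm HF.
  destruct (Tmap_jacobian l m p J HF) as (Rows & E20 & E30 & E21 & E31).
  destruct (Rows 0%nat), (Rows 1%nat), (Rows 2%nat), (Rows 3%nat); try lia; simpl in *.
  rewrite rank2_iff_cols01_zero, E20, E30, E21, E31 by assumption.
  now apply Tmap_critical_iff.
Qed.

(** Part 2.  In the normal-form coordinates x = (w, z) we have
    ∂K/∂x3 = a + b and ∂K/∂x4 = i (a - b), with a = l z^(l-1), b = w^m. *)
Definition ga (l : nat) (x : R4) : C := Cmul (INR l, 0) (Cpow (c2 x, c3 x) (pred l)).
Definition gb (m : nat) (x : R4) : C := Cpow (c0 x, c1 x) m.

Definition ghat (l m : nat) (x : R4) : R4 :=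
  mkR4 (fst (ga l x) + fst (gb m x)) (snd (ga l x) + snd (gb m x))
       (- snd (ga l x) + snd (gb m x)) (fst (ga l x) - fst (gb m x)).

Lemma ghat_spec (l m : nat) : is_ghat l m (ghat l m).
Proof.
  intros x.
  pose proof (Cderiv_Kmap l m _ _ _ _ (Cderiv_lin (c0 x) (c1 x) 0 0)
                (Cderiv_lin (c2 x) (c3 x) 1 0)) as [H2a H2b].
  pose proof (Cderiv_Kmap l m _ _ _ _ (Cderiv_lin (c0 x) (c1 x) 0 0)
                (Cderiv_lin (c2 x) (c3 x) 0 1)) as [H3a H3b].
  rewrite !Rmult_0_l, !Rplus_0_r in H2a, H2b, H3a, H3b.
  unfold Kder, ghat, ga, gb in *; simpl c0; simpl c1; simpl c2; simpl c3.
  destruct (Cpow (c2 x, c3 x) (pred l)), (Cpow (c0 x, c1 x) m), (Cpow (c0 x, c1 x) (pred m)).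
  unfold Cadd, Cmul, Cconj in *; simpl in *.
  unfold is_partial, Acomp, Bcomp; repeat split; (eapply dl_ext; [eassumption | ring]).
Qed.

Lemma ghat_differentiable (l m : nat) (x : R4) : exists J, FDeriv (ghat l m) x J.
Proof.
  assert (Ha : CFD (ga l) x).
  { apply (CFD_mul (fun _ => (INR l, 0)) (fun q => Cpow (c2 q, c3 q) (pred l)));
      [apply CFD_const | apply (CFD_pow (fun q => (c2 q, c3 q))), (CFD_coords 2); lia]. }
  assert (Hb : CFD (gb m) x) by (apply (CFD_pow (fun q => (c0 q, c1 q))), (CFD_coords 0); lia).
  destruct Ha as [A1 A2], Hb as [B1 B2].
  apply FDeriv_of_coords; simpl.
  - now apply (FD1ex_add (fun q => fst (ga l q)) (fun q => fst (gb m q))).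
  - now apply (FD1ex_add (fun q => snd (ga l q)) (fun q => snd (gb m q))).
  - now apply (FD1ex_add (fun q => - snd (ga l q)) (fun q => snd (gb m q)));
      [apply (FD1ex_opp (fun q => snd (ga l q)))|].
  - now apply (FD1ex_sub (fun q => fst (ga l q)) (fun q => fst (gb m q))).
Qed.

Definition Da (l : nat) (x : R4) (j : nat) : C :=
  Cmul (INR l, 0) (Cmul (INR (pred l), 0)
    (Cmul (Cpow (c2 x, c3 x) (pred (pred l))) (coord (basis j) 2, coord (basis j) 3))).
Definition Db (m : nat) (x : R4) (j : nat) : C :=
  Cmul (INR m, 0) (Cmul (Cpow (c0 x, c1 x) (pred m)) (coord (basis j) 0, coord (basis j) 1)).

Lemma Cderiv_ga (l : nat) (x : R4) (j : nat) :
  Cderiv (fun t => ga l (vadd x (vscale t (basis j)))) (Da l x j).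
Proof.
  pose proof (Cderiv_mul (fun _ => (INR l, 0)) _ _ _ (Cderiv_const (INR l, 0))
    (Cderiv_pow _ _ (pred l) (Cderiv_lin (c2 x) (c3 x) (coord (basis j) 2) (coord (basis j) 3))))
    as H.
  cbv beta in H; rewrite !Rmult_0_l, !Rplus_0_r in H; eapply Cderiv_ext; [exact H|].
  unfold Da; destruct (Cpow (c2 x, c3 x) (pred l)), (Cmul (INR (pred l), 0) _).
  unfold Cadd, Cmul; simpl; apply pair_eq; ring.
Qed.

Lemma Cderiv_gb (m : nat) (x : R4) (j : nat) :
  Cderiv (fun t => gb m (vadd x (vscale t (basis j)))) (Db m x j).
Proof.
  pose proof (Cderiv_pow _ _ m (Cderiv_lin (c0 x) (c1 x) (coord (basis j) 0) (coord (basis j) 1)))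
    as H.
  cbv beta in H; now rewrite !Rmult_0_l, !Rplus_0_r in H.
Qed.

Definition Jghat (l m : nat) (x : R4) : Mat := fun i j =>
  match i with
  | 0%nat => fst (Da l x j) + fst (Db m x j)
  | 1%nat => snd (Da l x j) + snd (Db m x j)
  | 2%nat => - snd (Da l x j) + snd (Db m x j)
  | _ => fst (Da l x j) - fst (Db m x j)
  end.

Lemma ghat_jacobian (l m : nat) (x : R4) (J : Mat) : FDeriv (ghat l m) x J ->
  forall i j, (i < 4)%nat -> (j < 4)%nat -> J i j = Jghat l m x i j.
Proof.
  intros HF i j Hi Hj.
  destruct (Cderiv_ga l x j) as [A1 A2], (Cderiv_gb m x j) as [B1 B2].
  apply (FDeriv_entry (ghat l m) x J i j); auto.
  destruct i as [|[|[|[|i]]]]; try lia; unfold Jghat; cbn [coord ghat c0 c1 c2 c3].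
  - now apply dplus.
  - now apply dplus.
  - now apply dplus; [apply dopp|].
  - now apply dminus.
Qed.

Lemma det4_ext (J K : Mat) :
  (forall i j, (i < 4)%nat -> (j < 4)%nat -> J i j = K i j) -> det4 J = det4 K.
Proof.
  intros H; unfold det4, detn, minor; simpl.
  rewrite !(H 0%nat 0%nat), !(H 0%nat 1%nat), !(H 0%nat 2%nat), !(H 0%nat 3%nat),
          !(H 1%nat 0%nat), !(H 1%nat 1%nat), !(H 1%nat 2%nat), !(H 1%nat 3%nat),
          !(H 2%nat 0%nat), !(H 2%nat 1%nat), !(H 2%nat 2%nat), !(H 2%nat 3%nat),
          !(H 3%nat 0%nat), !(H 3%nat 1%nat), !(H 3%nat 2%nat), !(H 3%nat 3%nat) by lia.
  reflexivity.
Qed.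

(** ĝ is an orientation-preserving linear change of the holomorphic map
    (w, z) |-> (w^m, l z^(l-1)), so its Jacobian determinant is
    |m w^(m-1)|^2 |l (l-1) z^(l-2)|^2 up to the factor 4. *)
Definition detF (l m : nat) (x : R4) : R :=
  4 * (INR m * INR m) * (INR l * INR l) * (INR (pred l) * INR (pred l)) *
  Cnorm2 (Cpow (c0 x, c1 x) (pred m)) * Cnorm2 (Cpow (c2 x, c3 x) (pred (pred l))).

Lemma detF_nonneg (l m : nat) (x : R4) : 0 <= detF l m x.
Proof.
  unfold detF; pose proof (Cnorm2_nonneg (Cpow (c0 x, c1 x) (pred m))).
  pose proof (Cnorm2_nonneg (Cpow (c2 x, c3 x) (pred (pred l)))).
  repeat apply Rmult_le_pos; try lra; apply pos_INR.
Qed.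

Lemma ghat_det (l m : nat) (x : R4) (J : Mat) : FDeriv (ghat l m) x J -> det4 J = detF l m x.
Proof.
  intros HF; rewrite (det4_ext J (Jghat l m x)) by now apply ghat_jacobian.
  unfold det4, detn, minor, Jghat, Da, Db, detF; simpl.
  destruct (Cpow (c0 x, c1 x) (pred m)), (Cpow (c2 x, c3 x) (pred (pred l))).
  unfold Cnorm2, Cmul; simpl; ring.
Qed.

(** The fibres of ĝ: ĝ(x) = y iff z^(l-1) = ca y and w^m = cb y. *)
Definition ca (l : nat) (y : R4) : C :=
  ((c0 y + c3 y) / (2 * INR l), (c1 y - c2 y) / (2 * INR l)).
Definition cb (y : R4) : C := ((c0 y - c3 y) / 2, (c1 y + c2 y) / 2).

Lemma ghat_eq_iff (l m : nat) (x y : R4) : (1 <= l)%nat ->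
  ghat l m x = y <-> (Cpow (c2 x, c3 x) (pred l) = ca l y /\ Cpow (c0 x, c1 x) m = cb y).
Proof.
  intros Hl; assert (HL : 0 < INR l) by (apply lt_0_INR; lia).
  unfold ghat, ga, gb, ca, cb.
  destruct (Cpow (c2 x, c3 x) (pred l)) as [u1 u2], (Cpow (c0 x, c1 x) m) as [v1 v2].
  destruct y as [y0 y1 y2 y3]; unfold Cmul; simpl; split.
  - intros E; injection E as E0 E1 E2 E3; split; apply pair_eq.
    all: try (apply Rmult_eq_reg_l with (2 * INR l); [|lra]; field_simplify; [|lra]).
    all: lra.
  - intros [E1 E2]; injection E1 as -> ->; injection E2 as -> ->; f_equal; field; lra.
Qed.

Lemma ca_zero (l : nat) : ca l zero4 = (0, 0).
Proof. unfold ca; simpl; apply pair_eq; unfold Rdiv; ring. Qed.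

Lemma cb_zero : cb zero4 = (0, 0).
Proof. unfold cb; simpl; apply pair_eq; unfold Rdiv; ring. Qed.

Lemma ghat_zero (l m : nat) : (2 <= l)%nat -> (1 <= m)%nat -> ghat l m zero4 = zero4.
Proof.
  intros; apply ghat_eq_iff; [lia|]; rewrite ca_zero, cb_zero; simpl.
  split; apply Cpow_0; lia.
Qed.

Lemma ghat_zero_only (l m : nat) (x : R4) : (2 <= l)%nat ->
  ghat l m x = zero4 -> x = zero4.
Proof.
  intros Hl Hx; apply ghat_eq_iff in Hx; [|lia].
  rewrite ca_zero, cb_zero in Hx; destruct Hx as [Hz Hw].
  apply Cpow_eq0 in Hz, Hw; destruct x; injection Hz as -> ->; injection Hw as -> ->.
  reflexivity.
Qed.

Lemma ghat_fiber_bounded (l m : nat) (x y : R4) : (2 <= l)%nat -> (1 <= m)%nat ->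
  norm4 y < 1 -> ghat l m x = y -> norm4 x < 2.
Proof.
  intros Hl Hm Hy Hx; apply ghat_eq_iff in Hx as [Hz Hw]; [|lia].
  assert (HL : 1 <= INR l) by (apply (le_INR 1); lia).
  rewrite norm4_eq in Hy.
  set (S := c0 y * c0 y + c1 y * c1 y + c2 y * c2 y + c3 y * c3 y) in Hy.
  assert (HS : S < 1).
  { destruct (Rlt_dec S 1) as [|N]; [assumption|].
    assert (sqrt 1 <= sqrt S) by (apply sqrt_le_1_alt; lra); rewrite sqrt_1 in *; lra. }
  assert (Hsq : forall u v, 0 <= u * u + v * v) by (intros; nra).
  assert (Ha : Cnorm2 (ca l y) < 1).
  { unfold ca, Cnorm2; simpl.
    replace ((c0 y + c3 y) / (2 * INR l) * ((c0 y + c3 y) / (2 * INR l)) +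
             (c1 y - c2 y) / (2 * INR l) * ((c1 y - c2 y) / (2 * INR l)))
      with (((c0 y + c3 y) * (c0 y + c3 y) + (c1 y - c2 y) * (c1 y - c2 y))
            / (4 * (INR l * INR l))) by (field; lra).
    apply Rmult_lt_reg_r with (4 * (INR l * INR l)); [nra|].
    unfold Rdiv; rewrite Rmult_assoc, Rinv_l by nra.
    pose proof (Hsq (c0 y - c3 y) (c1 y + c2 y)); unfold S in HS; nra. }
  assert (Hb : Cnorm2 (cb y) < 1).
  { unfold cb, Cnorm2; simpl.
    pose proof (Hsq (c0 y + c3 y) (c1 y - c2 y)); unfold S in HS; nra. }
  rewrite <- Hz in Ha; rewrite <- Hw in Hb.
  apply Cnorm2_lt1_of_pow in Ha, Hb; try lia; unfold Cnorm2 in *; simpl in *.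
  rewrite norm4_eq, <- (sqrt_square 2) by lra; apply sqrt_lt_1_alt; split; nra.
Qed.

(** At a regular value y, the targets ca y, cb y are nonzero unless the
    corresponding exponent is 1: otherwise a preimage with w = 0 (resp.
    z = 0) exists and the Jacobian determinant vanishes there. *)
Lemma regular_value_targets (l m : nat) (y : R4) : (2 <= l)%nat -> (1 <= m)%nat ->
  (forall x, ghat l m x = y -> detF l m x <> 0) ->
  (cb y <> (0, 0) \/ m = 1%nat) /\ (ca l y <> (0, 0) \/ pred l = 1%nat).
Proof.
  intros Hl Hm Hdet; split.
  - destruct (Nat.eq_dec m 1) as [|Hm1]; [now right|]; left; intros Eb.
    destruct (nth_root_exists (pred l) (ca l y) ltac:(lia)) as [z0 Hz0].
    apply (Hdet (mkR4 0 0 (fst z0) (snd z0))).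
    + apply ghat_eq_iff; [lia|]; simpl; rewrite Eb, Cpow_0 by lia; now destruct z0.
    + unfold detF; simpl; rewrite (Cpow_0 (pred m)) by lia; unfold Cnorm2; simpl; ring.
  - destruct (Nat.eq_dec (pred l) 1) as [|Hl1]; [now right|]; left; intros Ea.
    destruct (nth_root_exists m (cb y) Hm) as [w0 Hw0].
    apply (Hdet (mkR4 (fst w0) (snd w0) 0 0)).
    + apply ghat_eq_iff; [lia|]; simpl; rewrite Ea, Cpow_0 by lia; now destruct w0.
    + unfold detF; simpl; rewrite (Cpow_0 (pred (pred l))) by lia; unfold Cnorm2; simpl; ring.
Qed.

Lemma NoDup_list_prod {A B : Type} (L1 : list A) (L2 : list B) :
  NoDup L1 -> NoDup L2 -> NoDup (list_prod L1 L2).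
Proof.
  intros H1 H2; induction H1 as [|a L1 Ha H1 IH]; simpl; [constructor|].
  apply NoDup_app; auto.
  - apply Injective_map_NoDup; auto; intros u v E; now injection E.
  - intros [x y] Hx Hy; apply in_map_iff in Hx as [z [Ez _]]; injection Ez as <- _.
    apply in_prod_iff in Hy; tauto.
Qed.

Definition mk4 (pr : C * C) : R4 :=
  mkR4 (fst (fst pr)) (snd (fst pr)) (fst (snd pr)) (snd (snd pr)).

Lemma mk4_inj : Injective mk4.
Proof. intros [[a b] [c d]] [[a' b'] [c' d']] E; now injection E as -> -> -> ->. Qed.

Lemma ghat_fiber (l m : nat) (y : R4) : (2 <= l)%nat -> (1 <= m)%nat ->
  (cb y <> (0, 0) \/ m = 1%nat) -> (ca l y <> (0, 0) \/ pred l = 1%nat) ->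
  exists L : list R4, length L = (m * (l - 1))%nat /\ NoDup L /\
    forall x, In x L <-> ghat l m x = y.
Proof.
  intros Hl Hm HB HA.
  destruct (nth_roots m (cb y) Hm HB) as [W [HWl [HWnd HWi]]].
  destruct (nth_roots (pred l) (ca l y) ltac:(lia) HA) as [Zs [HZl [HZnd HZi]]].
  exists (map mk4 (list_prod W Zs)); split; [|split].
  - rewrite length_map, length_prod, HWl, HZl; lia.
  - apply Injective_map_NoDup; [apply mk4_inj | now apply NoDup_list_prod].
  - intros x; rewrite in_map_iff, ghat_eq_iff by lia; split.
    + intros [[w z] [<- Hin]]; apply in_prod_iff in Hin as [Hw Hz].
      apply HWi in Hw; apply HZi in Hz; destruct w, z; simpl; auto.
    + intros [Hz Hw]; exists ((c0 x, c1 x), (c2 x, c3 x)); split; [now destruct x|].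
      apply in_prod_iff; split; [apply HWi | apply HZi]; auto.
Qed.

Lemma signed_count_positive (f : R4 -> R4) (L : list R4) :
  (forall x, In x L -> exists J, FDeriv f x J /\ 0 < det4 J) ->
  exists pts : list (R4 * Mat), map fst pts = L /\
    Forall (fun p => FDeriv f (fst p) (snd p)) pts /\
    fold_right Z.add 0%Z (map (fun p => sgnZ (det4 (snd p))) pts) = Z.of_nat (length L).
Proof.
  induction L as [|x L IH]; intros H; [now exists nil|].
  destruct (H x (or_introl eq_refl)) as [J [HJ Hpos]].
  destruct IH as [pts (E & F & S)]; [intros; apply H; now right|].
  exists ((x, J) :: pts); simpl; rewrite E, S; repeat split; auto.
  unfold sgnZ; destruct (Rlt_dec 0 (det4 J)); [lia | lra].
Qed.

Lemma ghat_local_degree (l m : nat) : (2 <= l)%nat -> (1 <= m)%nat ->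
  IsLocalDegree (ghat l m) (Z.of_nat (m * (l - 1))).
Proof.
  intros Hl Hm; split; [now apply ghat_zero|].
  exists 2; split; [lra|]; split; [intros x _; now apply ghat_zero_only|].
  exists 1; split; [lra|]; intros y Hy Hreg.
  assert (Hdet : forall x, ghat l m x = y -> detF l m x <> 0).
  { intros x Hx; destruct (Hreg x (ghat_fiber_bounded l m x y Hl Hm Hy Hx) Hx) as [J [HJ HJd]].
    now rewrite <- (ghat_det l m x J). }
  destruct (regular_value_targets l m y Hl Hm Hdet) as [HB HA].
  destruct (ghat_fiber l m y Hl Hm HB HA) as [L (HL & Hnd & Hin)].
  destruct (signed_count_positive (ghat l m) L) as [pts (Ep & F & S)].
  { intros x Hx; apply Hin in Hx; destruct (ghat_differentiable l m x) as [J HJ].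
    exists J; split; [assumption|]; rewrite (ghat_det l m x J HJ).
    pose proof (detF_nonneg l m x); pose proof (Hdet x Hx); lra. }
  exists pts; rewrite Ep, S, HL; split; [assumption|]; split; [|split; auto].
  intros x; rewrite Hin; split; [|tauto].
  intros Hx; split; [eapply ghat_fiber_bounded|]; eauto.
Qed.

Theorem mainTheorem5 (l m : nat) (hl : (2 <= l)%nat) (hm : (1 <= m)%nat) :
  (forall p : R4, exists J : Mat, FDeriv (Tmap l m) p J /\ (rank4 J 2 <-> p = zero4)) /\
  (exists gh : R4 -> R4, is_ghat l m gh /\ IsLocalDegree gh (Z.of_nat (m * (l - 1)))).
Proof.
  split.
  - intros p; destruct (Tmap_differentiable l m p) as [J HJ].
    exists J; split; [assumption|]; now apply (Tmap_rank l m).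
  - exists (ghat l m); split; [apply ghat_spec | now apply ghat_local_degree].
Qed.
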